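(* Let $G$ be a connected bipartite plane graph with color classes black and white, and let $s_0,s_1$ be two vertices on its outer face. Then the generalized strong labelings of $G$ with special vertices $s_0,s_1$ are in bijection with the orientations of $S_G$ whose outdegrees are: $0$ at $s_0$ and $s_1$, $1$ at every edge-vertex, and $2$ at every other vertex (all other original vertices and all face-vertices).
   Context: An angle is an incidence of a vertex with a face. For an edge $e$ with white end $w$ and black end $b$, traverse $e$ from $w$ to $b$ and let $r_w,r_b$ be the labels of the angles at $w,b$ in the face to the right and $l_w,l_b$ those in the face to the left. A generalized strong labeling of $G$ is a map from angles to $\{0,1\}$ such that: (G0) all angles at $s_i$ are labeled $i$; (G1) for each vertex $v\notin\{s_0,s_1\}$ the labels around $v$ form one non-empty cyclic interval of $1$s and one non-empty cyclic interval of $0$s; (G2$^+$) for each edge the labels form one of six patterns: $r_w=r_b=c$ and $(l_w,l_b)\in\{(1-c,c),(c,1-c)\}$ for some $c\in\{0,1\}$ (four patterns), or $r_w=l_b=p$ and $r_b=l_w=1-p$ for some $p\in\{0,1\}$ (two patterns); (G3$^+$) each face (including the outer face) has, along its boundary walk, exactly one pair of consecutive angles (the angles at the two ends of an edge on the side of that face) both labeled $0$ and exactly one such pair both labeled $1$; moreover, the edge on the outer face boundary which contains $s_0$ and has the outer face to its right when traversed from its white end to its black end has both its outer-face labels equal to $0$. The graph $S_G$ has as vertices the vertices, the edges (edge-vertices) and the faces (face-vertices, including the outer face) of $G$; each edge-vertex $e=wb$ is adjacent to its two endpoints $w,b$ and to the face-vertex of the face to the right of $e$ when traversed from $w$ to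 $b$; there are no other edges. *)

(* A connected bipartite plane graph is encoded as a
   genus-0 combinatorial map (rotation system). *)
From mathcomp Require Import all_boot.
Set Implicit Arguments.
Unset Strict Implicit.
Unset Printing Implicit Defensive.

Section PlaneMap.
Variables (V F D : finType).
(* e : dart involution (the two darts/orientations of an edge);
   n : counterclockwise successor of a dart around its tail vertex;
   tail : tail vertex of a dart; face : face to the RIGHT of a dart;
   white : colour of a vertex (true = white, false = black). *)
Variables (e n : D -> D) (tail : D -> V) (face : D -> F) (white : V -> bool).

(* next dart along the boundary walk of the face on the right of d *)
Definition phi (d : D) : D := n (e d).

Definition vadj : rel V :=
  fun u v => [exists d, (tail d == u) && (tail (e d) == v)].

Definition plane_bipartite_map : Prop :=
  (forall d, e (e d) = d) /\ (forall d, e d != d) /\ injective n /\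
  (forall d, tail (n d) = tail d) /\
  (forall d d', tail d = tail d' -> fconnect n d d') /\
  (forall d, face (phi d) = face d) /\
  (forall d d', face d = face d' -> fconnect phi d d') /\
  (forall f, exists d, face d = f) /\
  (forall u v, connect vadj u v) /\
  (* planar: Euler's formula  #V - #E + #F = 2  with #E = #D/2 *)
  ((#|V| + #|F|).*2 = #|D| + 4) /\
  (forall d, white (tail (e d)) != white (tail d)).

(* Angles are identified with darts: the angle of dart d is the corner at
   tail d lying in the face to the right of d (between n^-1 d and d).
   A labeling is lab : {ffun D -> bool}, false = 0, true = 1. *)
Section Labeling.
Variables (outer : F) (s0 s1 : V) (lab : {ffun D -> bool}).

Definition G0 : Prop :=
  forall d, (tail d = s0 -> lab d = false) /\ (tail d = s1 -> lab d = true).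

Definition G1 : Prop :=
  forall v, v != s0 -> v != s1 ->
    exists d, tail d = v /\
      exists i, 0 < i < order n d /\
        forall j, j < order n d -> lab (iter j n d) = (j < i).

(* for the edge with white end w = tail d and black end b = tail (e d):
   r_w = lab d, r_b = lab (phi d), l_w = lab (n d), l_b = lab (e d) *)
Definition G2_pattern (rw rb lw lb : bool) : Prop :=
  (exists c : bool, rw = c /\ rb = c /\
     ((lw = ~~ c /\ lb = c) \/ (lw = c /\ lb = ~~ c))) \/
  (exists p : bool, rw = p /\ lb = p /\ rb = ~~ p /\ lw = ~~ p).

Definition G2 : Prop :=
  forall d, white (tail d) ->
    G2_pattern (lab d) (lab (phi d)) (lab (n d)) (lab (e d)).

(* the consecutive pairs of angles along the boundary walk of face f are
   (lab d, lab (phi d)) for the darts d with face d = f *)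
Definition G3 : Prop :=
  (forall f : F,
     #|[set d | (face d == f) && ~~ lab d && ~~ lab (phi d)]| = 1 /\
     #|[set d | (face d == f) && lab d && lab (phi d)]| = 1) /\
  (exists d, face d = outer /\ white (tail d) /\
     (tail d = s0 \/ tail (e d) = s0) /\
     lab d = false /\ lab (phi d) = false).

Definition gen_strong_labeling : Prop := G0 /\ G1 /\ G2 /\ G3.
End Labeling.

(* The graph S_G: vertices, edges (represented by their dart from the white
   end to the black end) and faces of G. *)
Definition Edart := {d : D | white (tail d)}.
Definition SV := (V + (Edart + F))%type.

Definition sadj (x y : SV) : bool :=
  match x, y with
  | inl v, inr (inl a) | inr (inl a), inl v =>
      (tail (val a) == v) || (tail (e (val a)) == v)
  | inr (inl a), inr (inr f) | inr (inr f), inr (inl a) => face (val a) == f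
  | _, _ => false
  end.

Definition orientation (O : {set SV * SV}) : Prop :=
  (forall x y, (x, y) \in O -> sadj x y) /\
  (forall x y, sadj x y -> ((x, y) \in O) != ((y, x) \in O)).

Definition outdeg (O : {set SV * SV}) (x : SV) : nat := #|[set y | (x, y) \in O]|.

Definition good_orientation (s0 s1 : V) (O : {set SV * SV}) : Prop :=
  orientation O /\
  forall x, outdeg O x =
    match x with
    | inl v => if (v == s0) || (v == s1) then 0 else 2
    | inr (inl _) => 1
    | inr (inr _) => 2
    end.
End PlaneMap.

From Pilot Require Import Defs.
From mathcomp Require Import all_boot all_algebra zify.
From Stdlib Require Import ClassicalEpsilon ProofIrrelevance.
Set Implicit Arguments.
Unset Strict Implicit.
Unset Printing Implicit Defensive.

(* Angles are darts, so a labeling is a 0/1 function on darts.  It induces an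
   orientation of S_G: a vertex points to an incident edge iff the labels of
   its two angles flanking that edge differ, and a face points to an edge iff
   the two angles of that edge inside the face agree.  Counting label changes
   turns (G1), (G2+) and (G3+) into exactly the prescribed outdegrees.
   Conversely, an orientation prescribes which consecutive angles (around a
   vertex, or along a face) have equal labels; finding the labels is a cocycle
   problem over F_2 on the dart graph.  Its 2-cells are the vertices, edges and
   faces of G, the outdegrees make the prescription sum to zero around each of
   them, and Euler's formula shows that these cells span the whole cycle space.
   So the labels exist and are unique up to a global flip, which (G0) fixes.
   The two edges of the outer face whose angles inside it are equal are
   incident to s0 and s1 and carry opposite labels, which gives the rest of
   (G0) and (G3+). *)

Lemma inj_surj_bijective (A B : Type) (f : A -> B) :
  injective f -> (forall b, exists a, f a = b) -> bijective f.
Proof.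
move=> f_inj f_surj.
pose g b := proj1_sig (constructive_indefinite_description _ (f_surj b)).
have gK : cancel g f.
  by move=> b; rewrite /g; case: constructive_indefinite_description.
by exists g => // a; apply: f_inj; rewrite gK.
Qed.

Lemma card_sub_seq (T : finType) (A : {set T}) (s : seq T) :
  uniq s -> {subset A <= s} -> #|A| = count (mem A) s.
Proof.
move=> s_uniq sAs; rewrite -size_filter -(card_uniqP _) ?filter_uniq //.
apply: eq_card => x; rewrite mem_filter.
by apply/idP/andP => [xA|[] //]; split; [exact: xA | exact: sAs].
Qed.

Lemma card2_other (T : finType) (A : {set T}) (t : T) :
  #|A| = 2 -> t \in A -> exists2 t', t' != t & A = [set t; t'].
Proof.
move=> A2 tA; have /cards1P [t' At'] : #|A :\ t| == 1.
  by move: A2; rewrite (cardsD1 t) tA add1n => -[->].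
have : t' \in A :\ t by rewrite At' set11.
rewrite in_setD1 => /andP [t't _]; exists t' => //.
apply/setP => u; rewrite in_set2; have [->|ut] := eqVneq u t; first by rewrite tA.
by rewrite -in_set1 -At' in_setD1 ut.
Qed.

Lemma G2_patternE rw rb lw lb :
  G2_pattern rw rb lw lb <-> ((rw == lw) + (lb == rb) + (rw != rb) = 1)%N.
Proof.
split=> [[[c [-> [-> [[-> ->]|[-> ->]]]]]|[p [-> [-> [-> ->]]]]]|]; try by case: c || case: p.
case: rw rb lw lb => [] [] [] [] //= _; rewrite /G2_pattern.
all: first [by right; exists true | by right; exists false |
            by left; exists true; do 2!split=> //; first [by left | by right] |
            by left; exists false; do 2!split=> //; first [by left | by right]].
Qed.

Section OrbitRuns.
Variables (T : finType) (f : T -> T) (L : T -> bool).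
Hypothesis f_inj : injective f.

Lemma iter_eq_lt x i j : i < order f x -> j < order f x ->
  (iter i f x == iter j f x) = (i == j).
Proof.
move=> lt_i lt_j; apply/eqP/eqP => [eq_ij|-> //].
by rewrite -(findex_iter lt_i) -(findex_iter lt_j) eq_ij.
Qed.

Lemma fconnect_iterP x y : fconnect f x y -> exists2 k, k < order f x & y = iter k f x.
Proof. by move=> xy; exists (findex f x y); rewrite ?findex_max ?iter_findex. Qed.

Lemma iter_flips (flip : T -> bool) :
    (forall y, L (f y) = L y (+) flip y) ->
  forall x k, L (iter k f x) = L x (+) odd (count (fun i => flip (iter i f x)) (iota 0 k)).
Proof.
move=> Lf x; elim=> [|k IH]; first by rewrite addbF.
by rewrite iterS Lf IH -addn1 iotaD count_cat /= addn0 add0n oddD oddb addbA.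
Qed.

Definition switches x := [set y | fconnect f x y & L y != L (f y)].

Lemma card_switches_of_run x i : 0 < i < order f x ->
    (forall j, j < order f x -> L (iter j f x) = (j < i)) ->
  #|switches x| = 2.
Proof.
set o := order f x => /andP [i_gt0 i_lt_o] Lx.
have iter_o : iter o f x = x by apply: iter_order.
have switch_iter k : k < o ->
    (L (iter k f x) != L (iter k.+1 f x)) = (k == i.-1) || (k == o.-1).
  move=> lt_k; have [lt_k1|eq_k1] : k.+1 < o \/ k.+1 = o by lia.
    by rewrite !Lx //; lia.
  by rewrite eq_k1 iter_o -[L x]/(L (iter 0 f x)) !Lx //; lia.
have -> : switches x = [set iter i.-1 f x; iter o.-1 f x].
  apply/setP => y; rewrite !inE; apply/andP/orP => [[/fconnect_iterP [k lt_k ->]]|].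
    by rewrite -iterS switch_iter // !iter_eq_lt //; lia.
  by case=> /eqP ->; rewrite fconnect_iter -iterS switch_iter //; lia.
by rewrite cards2 iter_eq_lt //; lia.
Qed.

Lemma switches_after x t : #|switches x| = 2 -> t \in switches x ->
  exists2 j, j < (order f (f t)).-1 &
    (forall k, k < order f (f t) -> L (iter k f (f t)) = L (f t) (+) (j < k)) /\
    iter j f (f t) \in switches x.
Proof.
move=> S2 tS; set y := f t; set o := order f y.
have Lf z : L (f z) = L z (+) (L z != L (f z)) by case: (L z); case: (L (f z)).
have [t' t't St] := card2_other S2 tS.
have o_gt0 : 0 < o by apply: order_gt0.
have t_last : iter o.-1 f y = t by apply: f_inj; rewrite -iterS prednK // iter_order.
have xy : fconnect f x y by rewrite -same_fconnect1_r //; move: tS; rewrite inE => /andP [].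
have [j lt_j t'E] : exists2 j, j < o & t' = iter j f y.
  apply: fconnect_iterP; rewrite (fconnect_sym f_inj) (connect_trans _ xy) //.
  by rewrite (fconnect_sym f_inj); move: (set22 t t'); rewrite -St inE => /andP [].
have lt_j' : j < o.-1 by move: t't; rewrite t'E -t_last iter_eq_lt //; lia.
exists j => //; split; last by rewrite -t'E St set22.
move=> k lt_k; rewrite (iter_flips Lf) (@eq_in_count _ _ (pred1 j)).
  by rewrite count_uniq_mem ?iota_uniq // mem_iota leq0n add0n oddb.
move=> i; rewrite mem_iota => /andP [_ lt_i] /=.
move: St => /setP /(_ (iter i f y)).
rewrite inE in_set2 (connect_trans xy (fconnect_iter f i y)) /= => ->.
by rewrite -t_last t'E !iter_eq_lt //; lia.
Qed.

Lemma run_of_card_switches x : #|switches x| = 2 ->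
  exists y, fconnect f x y /\ exists i, 0 < i < order f y /\
    forall j, j < order f y -> L (iter j f y) = (j < i).
Proof.
move=> S2.
have run t : t \in switches x -> L (f t) -> exists y, fconnect f x y /\
    exists i, 0 < i < order f y /\ forall j, j < order f y -> L (iter j f y) = (j < i).
  move=> tS Lft; have [j lt_j [Lk _]] := switches_after S2 tS.
  exists (f t); split; first by rewrite -same_fconnect1_r //; move: tS; rewrite inE => /andP [].
  by exists j.+1; split=> [|k lt_k]; rewrite ?Lk ?Lft //; lia.
have [t tS] : exists t, t \in switches x by apply/set0Pn; rewrite -card_gt0 S2.
case Lft: (L (f t)); first exact: (run t tS Lft).
have [j lt_j [Lk t'S]] := switches_after S2 tS.
apply: (run _ t'S); rewrite -iterS Lk ?Lft //; lia.
Qed.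
End OrbitRuns.

Section IndicatorSums.
Import GRing.Theory.
Local Open Scope ring_scope.
Variable R : pzSemiRingType.

Lemma sum_indicator_mul (T : finType) (a : T) (x : T -> R) :
  \sum_t (a == t)%:R * x t = x a.
Proof.
rewrite (bigD1 a) //= eqxx mul1r big1 ?addr0 // => t /negbTE.
by rewrite eq_sym => ->; rewrite mul0r.
Qed.

Lemma sum_indicator (T : finType) (P : pred T) (G : T -> R) :
  \sum_t (P t)%:R * G t = \sum_(t | P t) G t.
Proof.
by rewrite [RHS]big_mkcond; apply: eq_bigr => t _; case: (P t); rewrite ?mul1r ?mul0r.
Qed.

Lemma sum_bool_card (T : finType) (P Q : pred T) :
  \sum_(t | P t) (Q t)%:R = #|[set t | P t && Q t]|%:R :> R.
Proof.
rewrite -natr_sum -sum1_card; congr _%:R; rewrite big_mkcond [RHS]big_mkcond.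
by apply: eq_bigr => t _; rewrite inE; case: (P t); case: (Q t).
Qed.

Lemma sum_mul_indicator (T : finType) (a : T) (x : T -> R) :
  \sum_t x t * (a == t)%:R = x a.
Proof.
rewrite (bigD1 a) //= eqxx mulr1 big1 ?addr0 // => t /negbTE.
by rewrite eq_sym => ->; rewrite mulr0.
Qed.

End IndicatorSums.

Lemma sum_sub_perm (R : zmodType) (T : finType) (h : T -> T) (P : pred T) (G : T -> R) :
  injective h -> (forall t, P (h t) = P t) -> (\sum_(t | P t) (G (h t) - G t) = 0)%R.
Proof.
move=> h_inj Ph; rewrite GRing.sumrB [X in (_ - X)%R](reindex_inj h_inj) /=.
by under [X in (_ - X)%R]eq_bigl do rewrite Ph; rewrite GRing.subrr.
Qed.

Section F2.
Import GRing.Theory.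
Local Open Scope ring_scope.

Lemma F2_cases (x : 'F_2) : x = 0 \/ x = 1.
Proof. by case: x => [[|[|k]] // lt]; [left|right]; apply: val_inj. Qed.

Lemma F2_natr k : k%:R = (odd k)%:R :> 'F_2.
Proof. by rewrite -modn2 (Fp_nat_mod (isT : prime 2)). Qed.

Lemma F2_addb (a b : bool) : (a (+) b)%:R = a%:R + b%:R :> 'F_2.
Proof. by case: a; case: b; apply/eqP. Qed.

Lemma F2_bool_eq0 (b : bool) : (b%:R == 0 :> 'F_2) = ~~ b.
Proof. by case: b. Qed.

Lemma F2_add_eq0 (x y : 'F_2) : x + y = 0 -> x = y.
Proof. by case: (F2_cases x) => ->; case: (F2_cases y) => -> /eqP. Qed.

Lemma F2_sub_bool (x y : 'F_2) (b : bool) : y - x = b%:R -> (y != 0) = (x != 0) (+) b.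
Proof. by case: (F2_cases x) => ->; case: (F2_cases y) => ->; case: b => /eqP. Qed.

End F2.

Section CochainRank.
Import GRing.Theory.
Local Open Scope ring_scope.
Variable K : fieldType.

Lemma rank_ge_of_left_kernel_const m n (A : 'M[K]_(m, n)) :
    (forall u : 'rV_m, u *m A = 0 -> forall i j, u 0 i = u 0 j) ->
  (m - 1 <= \rank A)%N.
Proof.
move=> ker_const; suff : (\rank (kermx A) <= 1)%N by rewrite mxrank_ker; lia.
case: m A ker_const => [|m] A ker_const; first exact: leq_trans (rank_leq_row _) _.
apply: leq_trans (rank_leq_row (const_mx 1 : 'rV[K]_m.+1)).
apply/mxrankS/row_subP => i.
have -> : row i (kermx A) = kermx A i 0 *: const_mx 1.
  apply/rowP => j; have := ker_const (row i (kermx A)) _ j 0.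
  by rewrite !mxE mulr1; apply; rewrite -row_mul mulmx_ker row0.
exact/scalemx_sub/submx_refl.
Qed.

Lemma col_span_of_rank m n p (B : 'M[K]_(m, n)) (G : 'M[K]_(m, p)) :
  (\rank (row_mx B G) <= \rank B)%N -> exists M, G = B *m M.
Proof.
move=> rk; have sBG : (B^T <= B^T + G^T)%MS := addsmxSl _ _.
have /submxP [M GM] : (G^T <= B^T)%MS.
  apply: submx_trans (addsmxSr B^T G^T) _; rewrite -(mxrank_leqif_sup sBG).2.
  by rewrite eqn_leq (mxrankS sBG) addsmxE -tr_row_mx !mxrank_tr.
by exists M^T; rewrite -[G]trmxK GM trmx_mul trmxK.
Qed.

Definition fmx (A B : finType) (f : A -> B -> K) : 'M[K]_(#|A|, #|B|) :=
  \matrix_(i, j) f (enum_val i) (enum_val j).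

Lemma sum_enum_rank (T : finType) (F : 'I_#|T| -> K) :
  \sum_i F i = \sum_t F (enum_rank t).
Proof.
rewrite (reindex enum_rank) //.
by exists enum_val => x _; [rewrite enum_rankK | rewrite enum_valK].
Qed.

Lemma fmx_mulmx (A B : finType) p (f : A -> B -> K) (M : 'M[K]_(#|B|, p)) i j :
  (fmx f *m M) i j = \sum_b f (enum_val i) b * M (enum_rank b) j.
Proof. by rewrite mxE sum_enum_rank; apply: eq_bigr => b _; rewrite mxE enum_rankK. Qed.

Lemma fmx_rank_ge (A B : finType) (f : A -> B -> K) :
    (forall u : A -> K, (forall b, \sum_a u a * f a b = 0) -> forall a a', u a = u a') ->
  (#|A| - 1 <= \rank (fmx f))%N.
Proof.
move=> dep; apply: rank_ge_of_left_kernel_const => u /matrixP uf0 i j.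
have := dep (fun a => u 0 (enum_rank a)) _ (enum_val i) (enum_val j).
rewrite !enum_valK; apply => b.
have := uf0 0 (enum_rank b); rewrite !mxE sum_enum_rank => uf0b.
rewrite -[RHS]uf0b; apply: eq_bigr => a _; by rewrite mxE !enum_rankK.
Qed.

Section Incidence.
Variables (X Y : finType) (src dst : Y -> X).

Definition incidence_mx := fmx (fun y v => (dst y == v)%:R - (src y == v)%:R).

Lemma incidence_mxE y (x : X -> K) :
  \sum_v ((dst y == v)%:R - (src y == v)%:R) * x v = x (dst y) - x (src y).
Proof.
rewrite -(sum_indicator_mul (dst y) x) -(sum_indicator_mul (src y) x) -sumrB.
by apply: eq_bigr => v _; rewrite mulrBl.
Qed.

Lemma incidence_mx_rank :
    (forall x : X -> K, (forall y, x (src y) = x (dst y)) -> forall a b, x a = x b) ->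
  (#|X| - 1 <= \rank incidence_mx)%N.
Proof.
move=> conn; have -> : incidence_mx = (fmx (fun v y => (dst y == v)%:R - (src y == v)%:R))^T.
  by apply/matrixP => i j; rewrite !mxE.
rewrite mxrank_tr; apply: fmx_rank_ge => x x_ker; apply: conn => y.
apply/esym/eqP; rewrite -subr_eq0 -(x_ker y) -incidence_mxE.
by apply/eqP/eq_bigr => v _; rewrite mulrC.
Qed.
End Incidence.

(* The cycles [z c] span the cycle space of the connected graph [(src, dst)]:
   they have a single linear relation and there are enough of them. *)
Lemma cocycle_is_coboundary (X Y C : finType) (src dst : Y -> X)
    (z : C -> Y -> K) (g : Y -> K) :
    (forall x : X -> K, (forall y, x (src y) = x (dst y)) -> forall a b, x a = x b) ->
    (forall c v, \sum_y z c y * ((dst y == v)%:R - (src y == v)%:R) = 0) ->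
    (forall u : C -> K, (forall y, \sum_c u c * z c y = 0) -> forall a b, u a = u b) ->
    (forall c, \sum_y z c y * g y = 0) ->
    (#|Y| + 2 <= #|C| + #|X|)%N ->
  exists x : X -> K, forall y, x (dst y) - x (src y) = g y.
Proof.
move=> conn cyc dep orth cnt.
pose B := incidence_mx src dst; pose Z := fmx z; pose G := \col_(i < #|Y|) g (enum_val i).
have ZB : Z *m B = 0.
  apply/matrixP => i j; rewrite fmx_mulmx mxE -[RHS](cyc (enum_val i) (enum_val j)).
  by apply: eq_bigr => y _; rewrite mxE enum_rankK.
have ZG : Z *m G = 0.
  apply/matrixP => i j; rewrite fmx_mulmx mxE -[RHS](orth (enum_val i)).
  by apply: eq_bigr => y _; rewrite mxE enum_rankK.
have rkBG : (\rank (row_mx B G) <= \rank B)%N.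
  have /sub_kermxP/mxrankS : Z *m row_mx B G = 0 by rewrite mul_mx_row ZB ZG row_mx0.
  rewrite mxrank_ker; have := fmx_rank_ge dep; have := incidence_mx_rank conn.
  have := rank_leq_row (row_mx B G); rewrite -/B -/Z; lia.
have [M GBM] := col_span_of_rank rkBG.
exists (fun v => M (enum_rank v) 0) => y.
rewrite -(incidence_mxE src dst y (fun v => M (enum_rank v) 0)).
move/matrixP: GBM => /(_ (enum_rank y) 0); rewrite mxE enum_rankK fmx_mulmx => ->.
by rewrite enum_rankK.
Qed.

End CochainRank.

Section PlaneBipartiteMap.
Variables (V F D : finType) (e n : D -> D) (tail : D -> V) (face : D -> F)
  (white : V -> bool).
Hypothesis map : plane_bipartite_map e n tail face white.
Variables (outer : F) (s0 s1 : V).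

Local Notation phi := (phi e n).
Local Notation Ed := (Edart tail white).
Local Notation SV := (SV F tail white).
Local Notation sadj := (@Defs.sadj V F D e tail face white).

Lemma eK : involutive e. Proof. by case: map. Qed.
Lemma e_neq d : e d != d. Proof. by case: map => _ [neq _]; apply: neq. Qed.
Lemma n_inj : injective n. Proof. by case: map => _ [_ [inj _]]; apply: inj. Qed.
Lemma tail_n d : tail (n d) = tail d. Proof. by case: map => _ [_ [_ [tn _]]]; apply: tn. Qed.

Lemma tail_fconnect d d' : tail d = tail d' -> fconnect n d d'.
Proof. by case: map => _ [_ [_ [_ [conn _]]]]; apply: conn. Qed.

Lemma face_phi d : face (phi d) = face d.
Proof. by case: map => _ [_ [_ [_ [_ [fp _]]]]]; apply: fp. Qed.

Lemma face_fconnect d d' : face d = face d' -> fconnect phi d d'.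
Proof. by case: map => _ [_ [_ [_ [_ [_ [conn _]]]]]]; apply: conn. Qed.

Lemma face_surj f : exists d, face d = f.
Proof. by case: map => _ [_ [_ [_ [_ [_ [_ [surj _]]]]]]]; apply: surj. Qed.

Lemma vadj_connect u v : connect (vadj e tail) u v.
Proof. by case: map => _ [_ [_ [_ [_ [_ [_ [_ [conn _]]]]]]]]; apply: conn. Qed.

Lemma euler : ((#|V| + #|F|).*2 = #|D| + 4)%N.
Proof. by case: map => _ [_ [_ [_ [_ [_ [_ [_ [_ [eu _]]]]]]]]]; apply: eu. Qed.

Lemma white_e d : white (tail (e d)) = ~~ white (tail d).
Proof.
case: map => _ [_ [_ [_ [_ [_ [_ [_ [_ [_ /(_ d)]]]]]]]]].
by case: (white (tail (e d))); case: (white (tail d)).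
Qed.

Lemma e_inj : injective e. Proof. exact: can_inj eK. Qed.
Lemma phi_inj : injective phi. Proof. by move=> x y /n_inj /e_inj. Qed.
Lemma phi_e d : phi (e d) = n d. Proof. by rewrite /phi eK. Qed.
Lemma tail_phi d : tail (phi d) = tail (e d). Proof. exact: tail_n. Qed.
Lemma white_phi d : white (tail (phi d)) = ~~ white (tail d).
Proof. by rewrite tail_phi white_e. Qed.

Lemma tail_e_neq d : tail (e d) != tail d.
Proof. by apply/eqP => eq_t; have := white_e d; rewrite eq_t; case: (white _). Qed.

Lemma tail_iter k d : tail (iter k n d) = tail d.
Proof. by elim: k => //= k IH; rewrite tail_n. Qed.

Lemma face_iter k d : face (iter k phi d) = face d.
Proof. by elim: k => //= k IH; rewrite face_phi. Qed.

Lemma white_iter k d : white (tail (iter k phi d)) = white (tail d) (+) odd k.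
Proof. by elim: k => [|k IH] /=; rewrite ?addbF // white_phi IH addbN. Qed.

Lemma fconnect_n d d' : fconnect n d d' = (tail d == tail d').
Proof.
by apply/idP/eqP => [/fconnect_iterP [k _ ->]|/tail_fconnect //]; rewrite tail_iter.
Qed.

Lemma tail_surj (d0 : D) v : exists d, tail d = v.
Proof.
have /connectP [p pth ->] := vadj_connect (tail d0) v.
case/lastP: p pth => [|p u]; first by exists d0.
rewrite rcons_path last_rcons => /andP [_ /existsP [a /andP [_ /eqP tea]]].
by exists (e a).
Qed.

Lemma n_phi_invariant_const (T : Type) (h : D -> T) :
  (forall d, h (n d) = h d) -> (forall d, h (phi d) = h d) -> forall d d', h d = h d'.
Proof.
move=> hn hphi.
have he d : h (e d) = h d by rewrite -hphi phi_e hn.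
have h_tail d d' : tail d = tail d' -> h d = h d'.
  move/tail_fconnect/iter_findex <-.
  by elim: (findex _ _ _) => //= k ->; rewrite hn.
have h_path p d : path (vadj e tail) (tail d) p ->
    forall d', tail d' = last (tail d) p -> h d' = h d.
  elim: p d => [|u p IH] d /=; first by move=> _ d' /h_tail.
  case/andP => /existsP [a /andP [/eqP ta /eqP tea]] pth d' td'.
  by rewrite (IH (e a)) ?tea // he; apply: h_tail.
move=> d d'; have /connectP [p pth lst] := vadj_connect (tail d) (tail d').
exact/esym/(h_path p).
Qed.

Lemma edge_of_proof d : white (tail (if white (tail d) then d else e d)).
Proof. by case: ifP => // /negbT; rewrite white_e. Qed.

Definition edge_of d : Ed := exist (fun x => white (tail x)) _ (edge_of_proof d).

Lemma val_edge_of d : val (edge_of d) = if white (tail d) then d else e d.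
Proof. by []. Qed.

Lemma white_val (a : Ed) : white (tail (val a)). Proof. exact: valP a. Qed.

Lemma edge_of_e d : edge_of (e d) = edge_of d.
Proof. by apply: val_inj; rewrite !val_edge_of white_e eK; case: (white _). Qed.

Lemma edge_of_val a : edge_of (val a) = a.
Proof. by apply: val_inj; rewrite val_edge_of white_val. Qed.

Lemma edge_ofE d a : (edge_of d == a) = (d == val a) || (d == e (val a)).
Proof.
rewrite -(inj_eq val_inj) val_edge_of; case: ifP => wd.
  have [eda|] := eqVneq d (e (val a)); last by rewrite orbF.
  by move: wd; rewrite eda white_e white_val.
have [da|_] := eqVneq d (val a); first by move: wd; rewrite da white_val.
by rewrite -(inj_eq e_inj) eK.
Qed.

Lemma edge_of_tail_inj d d' : edge_of d = edge_of d' -> tail d = tail d' -> d = d'.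
Proof.
move=> eq_ed eq_t; have := eqxx (edge_of d'); rewrite -{1}eq_ed edge_ofE val_edge_of.
case: ifP => _ /orP [] /eqP dE; rewrite ?eK in dE => //;
  by have := tail_e_neq d'; rewrite -dE eq_t eqxx.
Qed.

Lemma card_edges (P : pred D) :
  #|[set a : Ed | P (val a)]| = #|[set d | white (tail d) && P d]|.
Proof.
rewrite -(card_imset _ val_inj); apply: eq_card => d; rewrite !inE.
apply/imsetP/andP => [[a] | [wd Pd]]; first by rewrite inE => Pa ->; rewrite white_val.
by exists (edge_of d); rewrite ?inE val_edge_of wd.
Qed.

Lemma card_edges_double : (#|{: Ed}|.*2 = #|D|)%N.
Proof.
have -> : #|{: Ed}| = #|[set d | white (tail d)]|.
  transitivity #|[set a : Ed | predT (val a)]|; first by apply: eq_card => a; rewrite !inE.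
  by rewrite card_edges; apply: eq_card => d; rewrite !inE andbT.
rewrite -addnn -(cardsC [set d | white (tail d)]); congr addn.
rewrite -(card_imset _ e_inj); apply: eq_card => d; rewrite !inE.
apply/imsetP/idP => [[d' wd' ->]|bd]; first by rewrite white_e negbK; rewrite inE in wd'.
by exists (e d); rewrite ?eK // inE white_e.
Qed.

Lemma face_size_even f : ~~ odd #|[set d | face d == f]|.
Proof.
rewrite -(cardsID [set d | white (tail d)]).
suff -> : #|[set d | face d == f] :\: [set d | white (tail d)]| =
          #|[set d | face d == f] :&: [set d | white (tail d)]|.
  by rewrite addnn odd_double.
rewrite -[RHS](card_imset _ phi_inj); apply: eq_card => d; rewrite !inE.
apply/andP/imsetP => [[bd /eqP fd]|[d' /setIP []]]; last first.
  by rewrite !inE => fd' wd' ->; rewrite white_phi wd' face_phi.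
have phiK : cancel (finv phi) phi := f_finv phi_inj.
exists (finv phi d); last by rewrite phiK.
by rewrite !inE -face_phi phiK fd eqxx -[white _]negbK -white_phi phiK.
Qed.

Lemma sum_edge_of (R : nmodType) (a : Ed) (G : D -> R) :
  (\sum_(d | edge_of d == a) G d = G (val a) + G (e (val a)))%R.
Proof.
rewrite (bigD1 (val a)) ?edge_of_val //= (bigD1 (e (val a))) /=; last first.
  by rewrite edge_of_e edge_of_val eqxx e_neq.
rewrite big1 ?GRing.addr0 // => d /andP [/andP [da nd1] nd2].
by move: da; rewrite edge_ofE (negbTE nd1) (negbTE nd2).
Qed.

Lemma sadj_sym x y : sadj x y = sadj y x.
Proof. by case: x => [v|[a|f]]; case: y => [w|[b|g]]. Qed.

Section Outdegrees.
Variable O : {set SV * SV}.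
Hypothesis O_sadj : forall x y, (x, y) \in O -> sadj x y.

Lemma outdeg_vertex v : outdeg O (inl v) =
  #|[set d | (tail d == v) && ((inl v, inr (inl (edge_of d))) \in O)]|.
Proof.
rewrite /outdeg -(card_in_imset (f := fun d => inr (inl (edge_of d)) : SV)).
  apply: eq_card => y; rewrite inE; apply/idP/imsetP => [vy|[d]]; last first.
    by rewrite inE => /andP [_ vd] ->.
  move: vy (O_sadj vy); case: y => [w|[a|f]] //= va /orP [] /eqP ta.
    by exists (val a); rewrite ?inE ?edge_of_val ?ta ?eqxx.
  by exists (e (val a)); rewrite ?inE ?edge_of_e ?edge_of_val ?ta ?eqxx.
move=> d d'; rewrite !inE => /andP [/eqP td _] /andP [/eqP td' _] [eq_ed].
by apply: edge_of_tail_inj; [apply: val_inj | rewrite td td'].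
Qed.

Lemma outdeg_edge (a : Ed) : outdeg O (inr (inl a)) =
  (((inr (inl a), inl (tail (val a))) \in O) +
   ((inr (inl a), inl (tail (e (val a)))) \in O) +
   ((inr (inl a), inr (inr (face (val a)))) \in O))%N.
Proof.
rewrite /outdeg (@card_sub_seq _ _ [:: inl (tail (val a)); inl (tail (e (val a)));
                                       inr (inr (face (val a)))]) /= ?inE ?addn0 ?addnA //.
  rewrite andbT; apply/norP; split => //.
  by apply/eqP => -[] /esym /eqP; rewrite (negbTE (tail_e_neq _)).
move=> y; rewrite inE => /O_sadj; case: y => [w|[b|g]] //= adj; rewrite !in_cons.
  by case/orP: adj => /eqP <-; rewrite eqxx ?orbT.
by rewrite (eqP adj) eqxx ?orbT.
Qed.

Lemma outdeg_face f : outdeg O (inr (inr f)) =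
  #|[set a : Ed | (face (val a) == f) && ((inr (inr f), inr (inl a)) \in O)]|.
Proof.
rewrite /outdeg -(card_in_imset (f := fun a => inr (inl a) : SV)) => [|a b _ _ [] //].
apply: eq_card => y; rewrite inE; apply/idP/imsetP => [fy|[a]]; last first.
  by rewrite inE => /andP [_ fa] ->.
by move: fy (O_sadj fy); case: y => [w|[a|g]] //= fa fae; exists a; rewrite // inE fae fa.
Qed.
End Outdegrees.

Lemma orientation_rev O x y : orientation e face O -> sadj x y ->
  ((y, x) \in O) = ~~ ((x, y) \in O).
Proof. by case=> _ /(_ x y) O_xor /O_xor; case: ((x, y) \in O); case: ((y, x) \in O). Qed.

Section LabelingOrientation.
Variable lab : {ffun D -> bool}.

(* The angles [d] and [n d] flank the edge of [d] at [tail d]; the angles [d]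
   and [phi d] are the two angles of that edge in the face to its right. *)
Definition vswitch d := lab d != lab (n d).
Definition fsteady d := lab d == lab (phi d).

Definition vertex_arc v (a : Ed) :=
  ((tail (val a) == v) && vswitch (val a)) ||
  ((tail (e (val a)) == v) && vswitch (e (val a))).

Definition lab_arc (x y : SV) : bool :=
  match x, y with
  | inl v, inr (inl a) => vertex_arc v a
  | inr (inl a), inl v => ~~ vertex_arc v a
  | inr (inr f), inr (inl a) => fsteady (val a)
  | inr (inl a), inr (inr f) => ~~ fsteady (val a)
  | _, _ => false
  end.

Definition lab_orientation : {set SV * SV} := [set p | sadj p.1 p.2 && lab_arc p.1 p.2].

Lemma lab_orientation_sadj x y : (x, y) \in lab_orientation -> sadj x y.
Proof. by rewrite inE => /andP []. Qed.

Lemma lab_orientation_orientation : orientation e face lab_orientation.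
Proof.
split=> [|x y xy]; first exact: lab_orientation_sadj.
rewrite !inE /= xy sadj_sym xy /=.
case: x xy => [v|[a|f]]; case: y => [w|[b|g]] //= _.
all: by [case: (vertex_arc _ _) | case: (fsteady _)].
Qed.

Lemma vertex_arc_tail d : vertex_arc (tail d) (edge_of d) = vswitch d.
Proof.
rewrite /vertex_arc val_edge_of; case: ifP => _;
  by rewrite ?eK eqxx /= ?(negbTE (tail_e_neq d)) /= ?orbF.
Qed.

Lemma lab_orientation_vertex d :
  ((inl (tail d), inr (inl (edge_of d))) \in lab_orientation) = vswitch d.
Proof.
rewrite inE /= vertex_arc_tail andbC; case: (vswitch d) => //=.
by case: ifP; rewrite ?eK eqxx ?orbT.
Qed.

Lemma lab_orientation_face (a : Ed) :
  ((inr (inr (face (val a))), inr (inl a)) \in lab_orientation) = fsteady (val a).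
Proof. by rewrite inE /= eqxx. Qed.

Lemma G2_edge_balance d :
  G2_pattern (lab d) (lab (phi d)) (lab (n d)) (lab (e d)) <->
  (~~ vswitch d + ~~ vswitch (e d) + ~~ fsteady d = 1)%N.
Proof. by rewrite /vswitch /fsteady !negbK; exact: G2_patternE. Qed.

Hypothesis lab_G2 : G2 e n tail white lab.

Lemma black_unsteady d : ~~ white (tail d) -> ~~ fsteady d.
Proof.
rewrite -white_e => /lab_G2/G2_patternE; rewrite eK -[n (e d)]/(phi d) /fsteady.
by case: (lab (e d)) (lab (phi (e d))) (lab (phi d)) (lab d) => [] [] [] [].
Qed.

Lemma lab_outdeg_edge a : outdeg lab_orientation (inr (inl a)) = 1.
Proof.
rewrite (outdeg_edge lab_orientation_sadj) !inE /= !eqxx ?orbT /=.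
have := vertex_arc_tail (e (val a)); have := vertex_arc_tail (val a).
rewrite edge_of_e edge_of_val => -> ->.
exact/G2_edge_balance/lab_G2/white_val.
Qed.

Hypothesis lab_G3 : G3 e n tail face white outer s0 lab.

Lemma lab_outdeg_face f : outdeg lab_orientation (inr (inr f)) = 2.
Proof.
rewrite (outdeg_face lab_orientation_sadj).
transitivity #|[set a : Ed | (face (val a) == f) && fsteady (val a)]|.
  apply: eq_card => a; rewrite inE [in RHS]inE.
  by case: eqP => //= <-; apply: lab_orientation_face.
rewrite (card_edges (fun d => (face d == f) && fsteady d)).
have [[card00 card11] _] := (lab_G3.1 f, lab_G3.2).
move: card00 card11; set S00 := [set d | _] => card00; set S11 := [set d | _] => card11.
have -> : [set d | white (tail d) && ((face d == f) && fsteady d)] = S00 :|: S11.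
  apply/setP => d; rewrite !inE; have := @black_unsteady d; rewrite /fsteady.
  by case: (white _); case: (face d == f); case: (lab d); case: (lab (phi d)); auto.
rewrite cardsU card00 card11 (_ : S00 :&: S11 = set0) ?cards0 //.
by apply/setP => d; rewrite !inE; case: (lab d); rewrite ?andbF.
Qed.

Hypothesis lab_G0 : G0 tail s0 s1 lab.
Hypothesis lab_G1 : G1 n tail s0 s1 lab.

Lemma special_no_vswitch d : (tail d == s0) || (tail d == s1) -> ~~ vswitch d.
Proof.
have [l0 l1] := lab_G0 d; have [nl0 nl1] := lab_G0 (n d); rewrite tail_n in nl0 nl1.
by case/orP => /eqP t; rewrite /vswitch; [rewrite l0 // nl0 | rewrite l1 // nl1].
Qed.

Lemma lab_outdeg_vertex v :
  outdeg lab_orientation (inl v) = if (v == s0) || (v == s1) then 0 else 2.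
Proof.
rewrite (outdeg_vertex lab_orientation_sadj).
transitivity #|[set d | (tail d == v) && vswitch d]|.
  apply: eq_card => d; rewrite inE [in RHS]inE.
  by case: eqP => //= <-; apply: lab_orientation_vertex.
case: ifP => [special | /norP [nv0 nv1]].
  apply/eqP; rewrite cards_eq0; apply/eqP/setP => d; rewrite !inE.
  by apply/negbTE/andP => -[/eqP td]; apply/negP/special_no_vswitch; rewrite td.
have [d [<- [i [lt_i run]]]] := lab_G1 nv0 nv1.
rewrite -(card_switches_of_run n_inj lt_i run); apply: eq_card => d'.
by rewrite !inE fconnect_n eq_sym.
Qed.

End LabelingOrientation.

Lemma lab_orientation_good lab :
    gen_strong_labeling e n tail face white outer s0 s1 lab ->
  good_orientation e face s0 s1 (lab_orientation lab).
Proof.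
case=> lab_G0 [lab_G1 [lab_G2 lab_G3]]; split; first exact: lab_orientation_orientation.
case=> [v|[a|f]]; [exact: lab_outdeg_vertex | exact: lab_outdeg_edge | exact: lab_outdeg_face].
Qed.

Lemma lab_orientation_inj lab1 lab2 d0 :
    G2 e n tail white lab1 -> G2 e n tail white lab2 ->
    lab_orientation lab1 = lab_orientation lab2 -> lab1 d0 = lab2 d0 ->
  lab1 = lab2.
Proof.
move=> G2_1 G2_2 eq_O eq_d0.
have eq_vswitch d : vswitch lab1 d = vswitch lab2 d by rewrite -!lab_orientation_vertex eq_O.
have eq_fsteady d : fsteady lab1 d = fsteady lab2 d.
  case wd: (white (tail d)); last first.
    have [b1 b2] := (black_unsteady G2_1 (negbT wd), black_unsteady G2_2 (negbT wd)).
    by rewrite (negbTE b1) (negbTE b2).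
  have := lab_orientation_face lab1 (edge_of d).
  by rewrite eq_O lab_orientation_face val_edge_of wd.
have inv_n d : lab1 (n d) (+) lab2 (n d) = lab1 d (+) lab2 d.
  move: (eq_vswitch d); rewrite /vswitch.
  by case: (lab1 d); case: (lab2 d); case: (lab1 (n d)); case: (lab2 (n d)).
have inv_phi d : lab1 (phi d) (+) lab2 (phi d) = lab1 d (+) lab2 d.
  move: (eq_fsteady d); rewrite /fsteady.
  by case: (lab1 d); case: (lab2 d); case: (lab1 (phi d)); case: (lab2 (phi d)).
apply/ffunP => d; have := n_phi_invariant_const inv_n inv_phi d d0.
by rewrite eq_d0 addbb; case: (lab1 d); case: (lab2 d).
Qed.

(* The dart graph has an arc [inl d] from [d] to [n d] and an arc [inr d] from
   [d] to [phi d]; [cell_boundary c] is the set of arcs bounding the 2-cell [c],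
   which is a vertex, an edge or a face of the map. *)
Definition dart_src (y : D + D) := match y with inl d | inr d => d end.
Definition dart_dst (y : D + D) := match y with inl d => n d | inr d => phi d end.

Definition cell_boundary (c : SV) (y : D + D) : bool :=
  match c, y with
  | inl v, inl d => tail d == v
  | inr (inl a), _ => edge_of (dart_src y) == a
  | inr (inr f), inr d => face d == f
  | _, _ => false
  end.

Section CellCochains.
Import GRing.Theory.
Local Open Scope ring_scope.

Lemma cell_boundary_closed c v :
  \sum_y (cell_boundary c y)%:R * ((dart_dst y == v)%:R - (dart_src y == v)%:R) = 0 :> 'F_2.
Proof.
rewrite sum_indicator big_sumType /=; case: c => [u|[a|f]] /=.
- rewrite big_pred0_eq addr0.
  by apply: (sum_sub_perm (fun d => (d == v)%:R) n_inj) => d; rewrite tail_n.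
- rewrite !sum_edge_of /= phi_e -[n (e (val a))]/(phi (val a)).
  move: (val a == v) (e (val a) == v) (n (val a) == v) (phi (val a) == v).
  by do 4 case; apply/eqP.
- rewrite big_pred0_eq add0r.
  by apply: (sum_sub_perm (fun d => (d == v)%:R) phi_inj) => d; rewrite face_phi.
Qed.

Lemma cells_dependent (d0 : D) (u : SV -> 'F_2) :
  (forall y, \sum_c u c * (cell_boundary c y)%:R = 0) -> forall c c', u c = u c'.
Proof.
move=> u_cyc.
have vertex_edge d : u (inl (tail d)) = u (inr (inl (edge_of d))).
  apply: F2_add_eq0; have := u_cyc (inl d); rewrite !big_sumType /= !sum_mul_indicator.
  by rewrite big1 ?addr0 // => f _; rewrite mulr0.
have face_edge d : u (inr (inr (face d))) = u (inr (inl (edge_of d))).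
  apply: F2_add_eq0; have := u_cyc (inr d); rewrite !big_sumType /= !sum_mul_indicator.
  by rewrite big1 ?add0r 1?addrC // => v _; rewrite mulr0.
have u_tail d d' : u (inl (tail d)) = u (inl (tail d')).
  apply: (@n_phi_invariant_const _ (fun d => u (inl (tail d)))) => {}d; first by rewrite tail_n.
  by rewrite tail_phi vertex_edge edge_of_e -vertex_edge.
have u_const c : u c = u (inl (tail d0)).
  case: c => [v|[a|f]].
  - by have [d <-] := tail_surj d0 v; apply: u_tail.
  - by rewrite -(edge_of_val a) -vertex_edge; apply: u_tail.
  - by have [d <-] := face_surj f; rewrite face_edge -vertex_edge; apply: u_tail.
by move=> c c'; rewrite !u_const.
Qed.
End CellCochains.

Section OrientationLabeling.
Variable O : {set SV * SV}.
Hypothesis O_good : good_orientation e face s0 s1 O.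

Lemma O_sadj x y : (x, y) \in O -> sadj x y.
Proof. by case: O_good => [[O_sub _] _]; apply: O_sub. Qed.

Lemma O_rev x y : sadj x y -> ((y, x) \in O) = ~~ ((x, y) \in O).
Proof. by case: O_good => orient _; apply: orientation_rev. Qed.

Lemma O_outdeg x : outdeg O x =
  match x with
  | inl v => if (v == s0) || (v == s1) then 0 else 2
  | inr (inl _) => 1
  | inr (inr _) => 2
  end.
Proof. by case: O_good. Qed.

Definition vswitchO d := (inl (tail d), inr (inl (edge_of d))) \in O.
Definition fsteadyO d :=
  white (tail d) && ((inr (inr (face d)), inr (inl (edge_of d))) \in O).

Lemma card_vswitchO v : #|[set d | (tail d == v) && vswitchO d]| =
  if (v == s0) || (v == s1) then 0 else 2.
Proof.
rewrite -(O_outdeg (inl v)) (outdeg_vertex O_sadj); apply: eq_card => d.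
by rewrite !inE; case: eqP => //= <-.
Qed.

Lemma edge_balance (a : Ed) :
  (~~ vswitchO (val a) + ~~ vswitchO (e (val a)) + ~~ fsteadyO (val a) = 1)%N.
Proof.
rewrite -(O_outdeg (inr (inl a))) (outdeg_edge O_sadj); congr (_ + _ + _)%N.
- by rewrite /vswitchO edge_of_val O_rev ?negbK //= eqxx.
- by rewrite /vswitchO edge_of_e edge_of_val O_rev ?negbK //= eqxx orbT.
- by rewrite /fsteadyO white_val edge_of_val O_rev ?negbK //= eqxx.
Qed.

Lemma card_fsteadyO f : #|[set d | (face d == f) && fsteadyO d]| = 2.
Proof.
transitivity #|[set d | white (tail d) && ((face d == f) && fsteadyO d)]|.
  by apply: eq_card => d; rewrite !inE /fsteadyO; case: (white _); rewrite ?andbF.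
rewrite -(card_edges (fun d => (face d == f) && fsteadyO d)).
rewrite -(O_outdeg (inr (inr f))) (outdeg_face O_sadj).
by apply: eq_card => a; rewrite !inE /fsteadyO white_val edge_of_val; case: eqP => //= ->.
Qed.
Lemma unsteadyO_even f : ~~ odd #|[set d | (face d == f) && ~~ fsteadyO d]|.
Proof.
have := face_size_even f; rewrite -(cardsID [set d | fsteadyO d]).
have -> : [set d | face d == f] :&: [set d | fsteadyO d] = [set d | (face d == f) && fsteadyO d].
  by apply/setP => d; rewrite !inE.
have -> : [set d | face d == f] :\: [set d | fsteadyO d] = [set d | (face d == f) && ~~ fsteadyO d].
  by apply/setP => d; rewrite !inE andbC.
by rewrite card_fsteadyO oddD.
Qed.

Section Cochain.
Import GRing.Theory.
Local Open Scope ring_scope.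

Definition orientation_cochain (y : D + D) : 'F_2 :=
  match y with inl d => (vswitchO d)%:R | inr d => (~~ fsteadyO d)%:R end.

Lemma orientation_cochain_closed c :
  \sum_y (cell_boundary c y)%:R * orientation_cochain y = 0.
Proof.
rewrite sum_indicator big_sumType /=; case: c => [v|[a|f]] /=.
- by rewrite big_pred0_eq addr0 sum_bool_card card_vswitchO F2_natr; case: ifP.
- rewrite !sum_edge_of /fsteadyO white_e white_val /= -[1]/(true%:R) -!F2_addb; apply/eqP.
  rewrite F2_bool_eq0; have := edge_balance a; rewrite /fsteadyO white_val /=.
  by case: (vswitchO _); case: (vswitchO _); case: (_ \in O).
- by rewrite big_pred0_eq add0r sum_bool_card F2_natr (negbTE (unsteadyO_even f)).
Qed.

Lemma orientation_cocycle (d0 : D) : exists x : D -> 'F_2,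
  (forall d, x (n d) - x d = (vswitchO d)%:R) /\
  (forall d, x (phi d) - x d = (~~ fsteadyO d)%:R).
Proof.
have [||x x_cob] := cocycle_is_coboundary (src := dart_src) (dst := dart_dst)
    (z := fun c y => (cell_boundary c y)%:R) (g := orientation_cochain) _
    cell_boundary_closed (cells_dependent d0) orientation_cochain_closed.
- move=> x x_inv; apply: n_phi_invariant_const => d.
    exact: esym (x_inv (inl d)).
  exact: esym (x_inv (inr d)).
- rewrite card_sum [#|{: SV}|]card_sum card_sum -[X in (_ <= _ + (X + _) + _)%N]/#|{: Ed}|.
  by have := euler; have := card_edges_double; lia.
by exists x; split=> d; [exact: x_cob (inl d) | exact: x_cob (inr d)].
Qed.
End Cochain.

Lemma orientation_labeling (d0 : D) : exists lab : {ffun D -> bool},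
  [/\ forall d, lab (n d) = lab d (+) vswitchO d,
      forall d, lab (phi d) = lab d (+) ~~ fsteadyO d & lab d0 = false].
Proof.
have [x [x_n x_phi]] := orientation_cocycle d0.
exists [ffun d => (x d != 0%R) (+) (x d0 != 0%R)]; split=> [d|d|]; rewrite !ffunE ?addbb //.
  by rewrite (F2_sub_bool (x_n d)) -!addbA (addbC (vswitchO d)).
by rewrite (F2_sub_bool (x_phi d)) -!addbA (addbC (~~ fsteadyO d)).
Qed.

Lemma special_no_vswitchO d : (tail d == s0) || (tail d == s1) -> vswitchO d = false.
Proof.
move=> sd; have := card_vswitchO (tail d); rewrite sd => /eqP; rewrite cards_eq0.
by move=> /eqP /setP /(_ d); rewrite !inE eqxx.
Qed.

Lemma special_edge_steady d s : (s == s0) || (s == s1) -> white (tail d) ->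
  tail d = s \/ tail (e d) = s -> fsteadyO d.
Proof.
move=> ss wd ds; have := edge_balance (edge_of d); rewrite val_edge_of wd.
case: ds => ts; [rewrite (@special_no_vswitchO d) | rewrite (@special_no_vswitchO (e d))];
  rewrite ?ts //=; by case: (vswitchO _); case: (fsteadyO d).
Qed.

Lemma no_special_edge d : tail d = s0 -> tail (e d) = s1 -> False.
Proof.
have sp0 : (s0 == s0) || (s0 == s1) by rewrite eqxx.
have sp1 : (s1 == s0) || (s1 == s1) by rewrite eqxx orbT.
move=> ts0 ts1; have := edge_balance (edge_of d); rewrite val_edge_of.
by case: ifP; rewrite ?eK !special_no_vswitchO ?ts0 ?ts1.
Qed.

Section LabelingOfOrientation.
Variable lab : {ffun D -> bool}.
Hypothesis lab_n : forall d, lab (n d) = lab d (+) vswitchO d.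
Hypothesis lab_phi : forall d, lab (phi d) = lab d (+) ~~ fsteadyO d.
Hypothesis s01 : s0 != s1.
Variables d0 d1 : D.
Hypotheses (d0_s0 : tail d0 = s0) (d0_outer : face d0 = outer).
Hypotheses (d1_s1 : tail d1 = s1) (d1_outer : face d1 = outer).
Hypothesis lab_d0 : lab d0 = false.

Let s0_special : (s0 == s0) || (s0 == s1). Proof. by rewrite eqxx. Qed.
Let s1_special : (s1 == s0) || (s1 == s1). Proof. by rewrite eqxx orbT. Qed.

Lemma vswitch_of d : vswitch lab d = vswitchO d.
Proof. by rewrite /vswitch lab_n; case: (lab d); case: (vswitchO d). Qed.

Lemma fsteady_of d : fsteady lab d = fsteadyO d.
Proof. by rewrite /fsteady lab_phi; case: (lab d); case: (fsteadyO d). Qed.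

Lemma lab_orientation_of : lab_orientation lab = O.
Proof.
apply/setP => -[x y]; rewrite inE /=.
have [xy|nxy] := boolP (sadj x y); last first.
  by apply/esym/negbTE; apply: contra nxy => /O_sadj.
have vertex_edge v (b : Ed) : sadj (inl v) (inr (inl b)) ->
    vertex_arc lab v b = ((inl v, inr (inl b)) \in O).
  rewrite /= => /orP [] /eqP <-.
    have := vertex_arc_tail lab (val b); rewrite edge_of_val => ->.
    by rewrite vswitch_of /vswitchO edge_of_val.
  have := vertex_arc_tail lab (e (val b)); rewrite edge_of_e edge_of_val => ->.
  by rewrite vswitch_of /vswitchO edge_of_e edge_of_val.
have face_edge (f : F) (b : Ed) : sadj (inr (inr f)) (inr (inl b)) ->
    fsteady lab (val b) = ((inr (inr f), inr (inl b)) \in O).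
  by rewrite /= => /eqP <-; rewrite fsteady_of /fsteadyO white_val edge_of_val.
rewrite /=; case: x y xy => [v|[a|f]] [w|[b|g]] //= xy.
- exact: vertex_edge.
- by rewrite O_rev -?vertex_edge // sadj_sym.
- by rewrite O_rev -?face_edge // sadj_sym.
- exact: face_edge.
Qed.

Lemma lab_G2_of : G2 e n tail white lab.
Proof.
move=> d wd; apply/G2_edge_balance; rewrite !vswitch_of fsteady_of.
by have := edge_balance (edge_of d); rewrite val_edge_of wd.
Qed.

Lemma lab_G1_of : G1 n tail s0 s1 lab.
Proof.
move=> v nv0 nv1; have [d dv] := tail_surj d0 v; subst v.
have card_switches : #|switches n lab d| = 2.
  have := card_vswitchO (tail d); rewrite (negbTE nv0) (negbTE nv1) /= => <-.
  apply: eq_card => d'.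
  by rewrite !inE fconnect_n -[lab d' != _]/(vswitch lab d') vswitch_of eq_sym.
have [y [dy run]] := run_of_card_switches n_inj card_switches.
by exists y; split=> //; apply/esym/eqP; rewrite -fconnect_n.
Qed.

(* From [m0] to [m1] along the face every step but the first flips the label,
   and the number of steps is even because both darts are white. *)
Lemma face_labels_flip f m0 m1 : m1 != m0 ->
  [set d | (face d == f) && fsteadyO d] = [set m0; m1] -> lab m1 = ~~ lab m0.
Proof.
move=> m10 steadyE.
have steady_in d : ((face d == f) && fsteadyO d) = (d == m0) || (d == m1).
  by move/setP: steadyE => /(_ d); rewrite !inE.
have /andP [/eqP fm0 sm0] : (face m0 == f) && fsteadyO m0 by rewrite steady_in eqxx.
have /andP [/eqP fm1 sm1] : (face m1 == f) && fsteadyO m1 by rewrite steady_in eqxx orbT.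
have [j lt_j m1E] := fconnect_iterP (face_fconnect (etrans fm0 (esym fm1))).
have j_gt0 : 0 < j by rewrite lt0n; apply: contraNneq m10 => j0; rewrite m1E j0.
have j_even : ~~ odd j.
  have := white_iter j m0; rewrite -m1E.
  by move: sm0 sm1; rewrite /fsteadyO => /andP [-> _] /andP [-> _]; case: (odd j).
have count_nonzero : count (fun i => i != 0) (iota 0 j) = j.-1.
  rewrite -{1}(prednK j_gt0) /= -[RHS](size_iota 1 j.-1) -count_predT.
  by apply: eq_in_count => i; rewrite mem_iota -lt0n => /andP [].
rewrite m1E (iter_flips lab_phi) (@eq_in_count _ _ (fun i => i != 0)).
  by move: j_even; rewrite count_nonzero -{1}(prednK j_gt0) /= negbK => ->; rewrite addbT.
move=> i; rewrite mem_iota add0n => /andP [_ lt_ij].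
have := steady_in (iter i phi m0); rewrite face_iter fm0 eqxx /= => ->.
rewrite m1E -[m0 in (_ == m0)]/(iter 0 phi m0) !iter_eq_lt ?order_gt0 //; try lia.
Qed.

Lemma lab_faces_of f :
  #|[set d | (face d == f) && ~~ lab d && ~~ lab (phi d)]| = 1 /\
  #|[set d | (face d == f) && lab d && lab (phi d)]| = 1.
Proof.
have [m0 m0S] : exists m0, m0 \in [set d | (face d == f) && fsteadyO d].
  by apply/set0Pn; rewrite -card_gt0 card_fsteadyO.
have [m1 m10 steadyE] := card2_other (card_fsteadyO f) m0S.
have flip := face_labels_flip m10 steadyE.
have pairs c : [set d | (face d == f) && (lab d == c) && (lab (phi d) == c)] =
    [set if lab m0 == c then m0 else m1].
  apply/setP => d; rewrite !inE.
  transitivity (((face d == f) && fsteadyO d) && (lab d == c)).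
    by rewrite -fsteady_of /fsteady; case: (lab d); case: (lab (phi d)); case: c; rewrite ?andbF.
  move/setP: steadyE => /(_ d); rewrite !inE => ->.
  have [->|dm0] := eqVneq d m0; first by case: (lab m0 == c); rewrite ?eqxx // eq_sym (negbTE m10).
  have [->|dm1] := eqVneq d m1; last by case: ifP; rewrite ?(negbTE dm0) ?(negbTE dm1).
  by rewrite /= flip; case: ifP; rewrite ?(negbTE m10) ?eqxx; case: (lab m0); case: c.
split.
  rewrite -[RHS](cards1 (if lab m0 == false then m0 else m1)) -pairs.
  by apply: eq_card => d; rewrite !inE !eqbF_neg.
rewrite -[RHS](cards1 (if lab m0 == true then m0 else m1)) -pairs.
by apply: eq_card => d; rewrite !inE !eqb_id.
Qed.

Lemma lab_special_const d d' : (tail d == s0) || (tail d == s1) -> tail d' = tail d ->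
  lab d' = lab d.
Proof.
move=> sd /esym/tail_fconnect/fconnect_iterP [k _ ->].
elim: k => //= k IH; rewrite lab_n IH special_no_vswitchO ?addbF //.
by rewrite tail_iter.
Qed.

Lemma outer_steady s ds : (s == s0) || (s == s1) -> tail ds = s -> face ds = outer ->
  exists m, [/\ white (tail m), face m = outer, fsteadyO m,
                tail m = s \/ tail (e m) = s & lab m = lab ds].
Proof.
move=> ss ts fs; case wds: (white (tail ds)).
  by exists ds; split=> //; [apply: (special_edge_steady ss) => //; left | left].
have phiK : cancel (finv phi) phi := f_finv phi_inj.
pose m := finv phi ds; have phim : phi m = ds by apply: phiK.
have wm : white (tail m) by rewrite -[white _]negbK -white_phi phim wds.
have tem : tail (e m) = s by rewrite -tail_phi phim.
have sm : fsteadyO m by apply: (special_edge_steady ss) => //; right.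
exists m; split=> //; first by rewrite -face_phi phim.
  by right.
by rewrite -phim lab_phi sm addbF.
Qed.

Lemma lab_d1 : lab d1 = true.
Proof.
have [m0 [_ f0 st0 e0 l0]] := outer_steady s0_special d0_s0 d0_outer.
have [m1 [_ f1 st1 e1 l1]] := outer_steady s1_special d1_s1 d1_outer.
have m10 : m1 != m0.
  apply/eqP => m10; move: e1; rewrite m10; case: e0 => t0 [] t1.
  - by move: s01; rewrite -t0 -t1 eqxx.
  - exact: no_special_edge t0 t1.
  - by apply: (@no_special_edge (e m0)); rewrite ?eK.
  - by move: s01; rewrite -t0 -t1 eqxx.
have m0S : m0 \in [set d | (face d == outer) && fsteadyO d] by rewrite inE f0 eqxx.
have [m m0m steadyE] := card2_other (card_fsteadyO outer) m0S.
have m1m : m1 = m.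
  have : m1 \in [set m0; m] by rewrite -steadyE inE f1 eqxx.
  by rewrite in_set2 (negbTE m10) => /eqP.
by rewrite -l1 m1m (face_labels_flip m0m steadyE) l0 lab_d0.
Qed.

Lemma lab_G0_of : G0 tail s0 s1 lab.
Proof.
move=> d; split=> td.
  by rewrite -lab_d0; apply: lab_special_const; rewrite ?d0_s0.
by rewrite -lab_d1; apply: lab_special_const; rewrite ?d1_s1.
Qed.

Lemma lab_G3_of : G3 e n tail face white outer s0 lab.
Proof.
split; first exact: lab_faces_of.
have [m [wm fm sm em lm]] := outer_steady s0_special d0_s0 d0_outer.
by exists m; rewrite lab_phi sm addbF lm lab_d0.
Qed.

Lemma lab_strong_of : gen_strong_labeling e n tail face white outer s0 s1 lab.
Proof.
split; first exact: lab_G0_of.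
by split; [exact: lab_G1_of | split; [exact: lab_G2_of | exact: lab_G3_of]].
Qed.

End LabelingOfOrientation.
End OrientationLabeling.
End PlaneBipartiteMap.

Theorem proposition33 (V F D : finType) (e n : D -> D) (tail : D -> V)
    (face : D -> F) (white : V -> bool) (outer : F) (s0 s1 : V) :
  @plane_bipartite_map V F D e n tail face white ->
  s0 != s1 ->
  (exists d, tail d = s0 /\ face d = outer) ->
  (exists d, tail d = s1 /\ face d = outer) ->
  exists f : {lab : {ffun D -> bool} |
                @gen_strong_labeling V F D e n tail face white outer s0 s1 lab} ->
             {O : {set @SV V F D tail white * @SV V F D tail white} |
                @good_orientation V F D e tail face white s0 s1 O},
    bijective f.
Proof.
move=> map s01 [d0 [d0_s0 d0_outer]] [d1 [d1_s1 d1_outer]].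
exists (fun lab => exist _ _ (lab_orientation_good map (proj2_sig lab))).
apply: inj_surj_bijective => [[lab1 strong1] [lab2 strong2] /(congr1 sval) /= eq_O|[O O_good]].
  apply: subset_eq_compat.
  apply: (lab_orientation_inj (d0 := d0) map strong1.2.2.1 strong2.2.2.1 eq_O).
  by rewrite (strong1.1 d0).1 ?(strong2.1 d0).1.
have [lab [lab_n lab_phi lab_d0]] := orientation_labeling map O_good d0.
exists (exist _ lab (lab_strong_of O_good lab_n lab_phi s01 d0_s0 d0_outer d1_s1 d1_outer lab_d0)).
by apply: subset_eq_compat; exact: (lab_orientation_of O_good lab_n lab_phi).
Qed.
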